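(* Let $\mathcal{X}$ be a probability distribution over a set of queries, $k \geq 1$, and $\hat q_1,\dots,\hat q_k,\hat c_1,\dots,\hat c_k : \mathcal{X} \to \mathbb{R}$ integrable functions, and assume the set $\Lambda$ is finite. Let $0 \leq \lambda_1 < \lambda_2$ and let $s^{(1)} \in S_{\lambda_1}$, $s^{(2)} \in S_{\lambda_2}$ have costs $B_1 = C(s^{(1)})$ and $B_2 = C(s^{(2)})$ respectively. Then for every $B \in [B_2, B_1]$ there exists $\lambda \in [\lambda_1,\lambda_2]$ such that $S_\lambda$ contains a routing strategy $s$ with $C(s) = B$.
   Context: A routing strategy is a measurable function $s : \mathcal{X} \to \mathbb{R}^k$ with $s_i(x) \geq 0$ for all $i$ and $\sum_{i=1}^k s_i(x) = 1$ for all $x$; its cost is $C(s) = \mathbb{E}_{x \sim \mathcal{X}}\left[\sum_{i=1}^k s_i(x)\hat c_i(x)\right]$. For $\lambda \in \mathbb{R}^+$, $S_\lambda$ is the set of routing strategies $s$ such that for all $x \in \mathcal{X}$ and $i \in \{1,\dots,k\}$: if $\hat q_i(x) - \lambda \hat c_i(x) < \max_j(\hat q_j(x) - \lambda \hat c_j(x))$ then $s_i(x) = 0$. $\Lambda$ is the set of $\lambda \in \mathbb{R}$ for which there exist $x \in \mathcal{X}$ and $i \neq j$ with $\hat q_i(x) - \lambda \hat c_i(x) = \hat q_j(x) - \lambda \hat c_j(x)$. *)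

From HB Require Import structures.
From mathcomp Require Import all_boot all_order all_algebra.
From mathcomp Require Import all_classical all_reals all_analysis.
Set Implicit Arguments. Unset Strict Implicit. Unset Printing Implicit Defensive.
Import Order.TTheory GRing.Theory Num.Theory.
Local Open Scope classical_set_scope.
Local Open Scope ring_scope.

Section Routing.
Context {d : measure_display} {X : measurableType d} {R : realType} {k : nat}.

Definition routing_strategy (s : X -> 'I_k -> R) : Prop :=
  (forall i, measurable_fun setT (fun x => s x i)) /\
  (forall x i, 0 <= s x i) /\
  (forall x, \sum_(i < k) s x i = 1).

Definition cost (P : probability X R) (c : 'I_k -> X -> R)
  (s : X -> 'I_k -> R) : \bar R :=
  (\int[P]_x (\sum_(i < k) s x i * c i x)%:E)%E.

Definition in_S (q c : 'I_k -> X -> R) (lam : R) (s : X -> 'I_k -> R) : Prop :=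
  routing_strategy s /\
  forall x i, q i x - lam * c i x < \big[Num.max/q i x - lam * c i x]_(j < k) (q j x - lam * c j x) ->
    s x i = 0.

Definition Lambda (q c : 'I_k -> X -> R) : set R :=
  [set lam | exists x i j, i != j /\ q i x - lam * c i x = q j x - lam * c j x].

End Routing.

(** The score [q_i - lam c_i] of each model is affine in [lam], so the order of the
    scores, and with it the set [S_lam], can only change at a tie point.  On an interval
    without tie points, the greedy strategy at an interior point therefore lies in [S_lam]
    for both endpoints.  Within a single [S_lam], convex combinations of two strategies
    realise every cost between theirs, since the cost is linear.  Chaining these two facts
    across the finitely many tie points in [[lam1, lam2]] gives the result. *)

From HB Require Import structures.
From mathcomp Require Import all_boot all_order all_algebra.
From mathcomp Require Import all_classical all_reals all_analysis.
From mathcomp Require Import measurable_realfun ring lra.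
Import Order.TTheory GRing.Theory Num.Theory.
Local Open Scope classical_set_scope.
Local Open Scope ring_scope.

Definition between {R : realDomainType} (a b x : R) := (a <= x <= b) \/ (b <= x <= a).

Lemma between_split {R : realDomainType} {a b x : R} (c : R) :
  between a b x -> between a c x \/ between c b x.
Proof.
rewrite /between => hx; case: (lerP x c) => hc; case: hx => /andP[h1 h2].
- by left; left; apply/andP.
- by right; right; apply/andP.
- by right; left; rewrite ltW.
- by left; right; rewrite ltW.
Qed.

Lemma affine_ge0_stable {R : realFieldType} {a b l1 l2 nu lam : R} :
  l1 < nu < l2 -> l1 <= lam <= l2 -> (forall mu, l1 < mu < l2 -> a - mu * b != 0) ->
  0 <= a - nu * b -> 0 <= a - lam * b.
Proof.
move=> /andP[l1nu nul2] /andP[l1lam laml2] nz nu_ge0.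
have nu_gt0 : 0 < a - nu * b by rewrite lt0r nz ?l1nu.
rewrite leNgt; apply/negP => lam_lt0.
have b_neq0 : b != 0 by apply/eqP => b0; rewrite b0 in nu_gt0 lam_lt0; lra.
suff /nz : l1 < a / b < l2 by rewrite divfK // subrr eqxx.
case: (ltgtP b 0) => [b_lt0|b_gt0|b0]; last by rewrite b0 eqxx in b_neq0.
- have h1 : a / b < nu by rewrite ltr_ndivrMr //; lra.
  have h2 : lam < a / b by rewrite ltr_ndivlMr //; lra.
  apply/andP; split; lra.
- have h1 : nu < a / b by rewrite ltr_pdivlMr //; lra.
  have h2 : a / b < lam by rewrite ltr_pdivrMr //; lra.
  apply/andP; split; lra.
Qed.

Lemma measurable_bigmax {d} {T : measurableType d} {R : realType} (D : set T)
    (I : Type) (r : seq I) (P : pred I) (h0 : T -> R) (h : I -> T -> R) :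
  measurable_fun D h0 -> (forall i, measurable_fun D (h i)) ->
  measurable_fun D (fun x => \big[Num.max/h0 x]_(i <- r | P i) h i x).
Proof.
move=> m0 mh; elim: r => [|a r ih]; first by under eq_fun do rewrite big_nil.
under eq_fun do rewrite big_cons.
by case: (P a) => //; exact: measurable_maxr.
Qed.

Section Routing.
Context {d : measure_display} {X : measurableType d} {R : realType} {k : nat}.
Variables (P : probability X R) (q c : 'I_k -> X -> R).
Hypotheses (hk : (0 < k)%N)
  (hq : forall i, P.-integrable setT (fun x => (q i x)%:E))
  (hc : forall i, P.-integrable setT (fun x => (c i x)%:E)).
Implicit Types (s t : X -> 'I_k -> R) (lam mu : R).

Definition score lam i x := q i x - lam * c i x.

Lemma in_S_iff lam s : in_S q c lam s <->
  routing_strategy s /\ forall x i, s x i != 0 -> forall j, score lam j x <= score lam i x.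
Proof.
split=> -[rs top]; split=> // x i.
- move=> si_neq0 j; rewrite leNgt; apply: contra si_neq0 => lt_ij.
  by apply/eqP/top/(lt_le_trans lt_ij); exact: le_bigmax.
- move=> lt_max; apply/eqP; apply: contraTT lt_max => /top le_i.
  by rewrite -leNgt; apply/bigmax_leP; split=> // j _; exact: le_i.
Qed.

Definition tie_free l1 l2 := forall mu, l1 < mu < l2 -> ~ Lambda q c mu.

Lemma in_S_stable l1 l2 nu lam s : tie_free l1 l2 ->
  l1 < nu < l2 -> l1 <= lam <= l2 -> in_S q c nu s -> in_S q c lam s.
Proof.
move=> tf hnu hlam /in_S_iff[rs top]; apply/in_S_iff; split=> // x i si_neq0 j.
have [->|ji] := eqVneq j i; first exact: lexx.
have diffE mu : score mu i x - score mu j x = (q i x - q j x) - mu * (c i x - c j x).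
  by rewrite /score; ring.
rewrite -subr_ge0 diffE; apply: (affine_ge0_stable hnu hlam).
  move=> mu hmu; rewrite -diffE subr_eq0; apply/eqP => tie.
  by apply: (tf mu hmu); exists x, i, j; rewrite eq_sym.
by rewrite -diffE subr_ge0; exact: top.
Qed.

Definition mix (a : R) s t x i := (1 - a) * s x i + a * t x i.

Lemma routing_strategy_mix a s t : 0 <= a <= 1 ->
  routing_strategy s -> routing_strategy t -> routing_strategy (mix a s t).
Proof.
move=> /andP[a0 a1] [ms [s0 s1]] [mt [t0 t1]]; split; [|split].
- move=> i; apply: measurable_funD.
    exact: measurable_funM (measurable_cst _) (ms i).
  exact: measurable_funM (measurable_cst _) (mt i).
- by move=> x i; rewrite /mix addr_ge0 // mulr_ge0 // subr_ge0.
- by move=> x; rewrite /mix big_split /= -!mulr_sumr s1 t1; ring.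
Qed.

Lemma in_S_mix lam a s t : 0 <= a <= 1 ->
  in_S q c lam s -> in_S q c lam t -> in_S q c lam (mix a s t).
Proof.
move=> a01 [rs top_s] [rt top_t]; split; first exact: routing_strategy_mix.
by move=> x i lt_max; rewrite /mix top_s // top_t // !mulr0 addr0.
Qed.

Lemma integrable_routed_cost {s} : routing_strategy s ->
  P.-integrable setT (fun x => (\sum_(i < k) s x i * c i x)%:E).
Proof.
move=> [ms [s0 s1]]; under eq_fun do rewrite -sumEFin.
apply: integrable_sum => // i _; under eq_fun do rewrite EFinM.
apply: (integrableMr measurableT (ms i) _ (hc i)).
exists 1; split=> // M M1 x _ /=; rewrite ger0_norm // (le_trans _ (ltW M1)) //.
by rewrite -(s1 x) (bigD1 i) //= lerDl sumr_ge0.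
Qed.

Lemma cost_finite {s} : routing_strategy s -> exists C : R, cost P c s = C%:E.
Proof.
move=> /integrable_routed_cost /(integrable_fin_num measurableT) cost_fin.
by exists (fine (cost P c s)); rewrite fineK.
Qed.

Lemma cost_mix a {s t Bs Bt} : routing_strategy s -> routing_strategy t ->
  cost P c s = Bs%:E -> cost P c t = Bt%:E ->
  cost P c (mix a s t) = ((1 - a) * Bs + a * Bt)%:E.
Proof.
move=> rs rt Hs Ht; rewrite EFinD !EFinM -Hs -Ht /cost.
have ints := integrable_routed_cost rs; have intt := integrable_routed_cost rt.
rewrite -!integralZl // -integralD //; try exact: integrableZl.
apply: eq_integral => x _; rewrite -!EFinM -EFinD; congr EFin.
by rewrite /mix !mulr_sumr -big_split; apply: eq_bigr => i _ /=; ring.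
Qed.

Lemma in_S_cost_convex lam s t Bs Bt B :
  in_S q c lam s -> in_S q c lam t -> cost P c s = Bs%:E -> cost P c t = Bt%:E ->
  between Bs Bt B -> exists u, in_S q c lam u /\ cost P c u = B%:E.
Proof.
wlog le_B : s t Bs Bt / Bs <= B <= Bt.
  move=> wlog hs ht Hs Ht [hB|hB].
  - by apply: (wlog s t Bs Bt) => //; left.
  - by apply: (wlog t s Bt Bs) => //; left.
move=> hs ht Hs Ht _; have /andP[le_sB le_Bt] := le_B.
have [eq_st|neq_st] := eqVneq Bs Bt.
  by exists s; split=> //; rewrite Hs; congr EFin; apply/eqP; rewrite eq_le le_sB eq_st.
have le_st := le_trans le_sB le_Bt.
have lt_st : 0 < Bt - Bs by rewrite subr_gt0 lt_neqAle neq_st.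
pose a := (B - Bs) / (Bt - Bs).
have a01 : 0 <= a <= 1.
  by rewrite /a divr_ge0 ?subr_ge0 //= ler_pdivrMr // mul1r lerB.
exists (mix a s t); split; first exact: in_S_mix.
rewrite (cost_mix a hs.1 ht.1 Hs Ht); congr EFin; rewrite /a; field.
by rewrite lt0r_neq0.
Qed.

Definition top_score lam x := \big[Num.max/score lam (Ordinal hk) x]_(j < k) score lam j x.

(* [i] is the first index attaining the top score: the maximum over [j < i], seeded
   strictly below the top score, stays below it. *)
Definition first_top lam x i := (top_score lam x <= score lam i x) &&
  (\big[Num.max/(top_score lam x - 1)]_(j < k | (j < i)%N) score lam j x < top_score lam x).

Definition greedy lam x i : R := if first_top lam x i then 1 else 0.

Lemma first_topP lam x i : reflect
  (top_score lam x <= score lam i x /\ forall j : 'I_k, (j < i)%N -> score lam j x < top_score lam x)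
  (first_top lam x i).
Proof.
apply: (iffP andP) => -[le_top lt_before]; split=> //.
- by move: lt_before => /bigmax_ltP[].
- by apply/bigmax_ltP; rewrite gtrBl ltr01.
Qed.

Lemma first_top_uniq {lam x i j} : first_top lam x i -> first_top lam x j -> i = j.
Proof.
move=> /first_topP[top_i before_i] /first_topP[top_j before_j]; apply: val_inj => /=.
case: (ltngtP i j) => // [ij|ji].
- by have := before_j i ij; rewrite ltNge top_i.
- by have := before_i j ji; rewrite ltNge top_j.
Qed.

Lemma exists_first_top lam x : exists i, first_top lam x i.
Proof.
pose best := [arg max_(i > Ordinal hk) score lam i x]%O.
have top_best : top_score lam x <= score lam best x.
  rewrite /best; case: arg_maxP => // i _ max_i.
  by apply/bigmax_leP; split=> [|j _]; exact: max_i.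
case: (@arg_minnP _ best (fun j => top_score lam x <= score lam j x) val top_best).
move=> i top_i min_i.
exists i; apply/first_topP; split=> // j ji; rewrite ltNge; apply/negP => top_j.
by have := min_i j top_j; rewrite leqNgt ji.
Qed.

Lemma measurable_score lam i : measurable_fun setT (score lam i).
Proof.
have mq : measurable_fun setT (q i) by apply/measurable_EFinP; exact: measurable_int (hq i).
have mc : measurable_fun setT (c i) by apply/measurable_EFinP; exact: measurable_int (hc i).
exact: measurable_funB mq (measurable_funM (measurable_cst lam) mc).
Qed.

Lemma greedy_in_S lam : in_S q c lam (greedy lam).
Proof.
have mtop : measurable_fun setT (top_score lam).
  by apply: measurable_bigmax => *; exact: measurable_score.
apply/in_S_iff; split; [split; [|split]|].
- move=> i; apply: measurable_fun_ifT => //; apply: measurable_and.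
    exact: measurable_fun_ler (measurable_score lam i).
  apply: measurable_fun_ltr => //; apply: measurable_bigmax => [|j].
    exact: measurable_funB mtop (measurable_cst (1 : R)).
  exact: measurable_score.
- by move=> x i; rewrite /greedy; case: ifP.
- move=> x; have [i top_i] := exists_first_top lam x.
  rewrite (bigD1 i) //= big1 => [|j ji]; first by rewrite /greedy top_i addr0.
  rewrite /greedy ifN //; apply: contra ji => top_j.
  by rewrite (first_top_uniq top_j top_i).
- move=> x i; rewrite /greedy; case: ifP => [/first_topP[top_i _] _ j|]; last by rewrite eqxx.
  by apply: le_trans top_i; exact: le_bigmax.
Qed.

Definition cost_ivp l1 l2 := forall s1 s2 B1 B2 B,
  in_S q c l1 s1 -> in_S q c l2 s2 -> cost P c s1 = B1%:E -> cost P c s2 = B2%:E ->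
  between B1 B2 B ->
  exists lam, l1 <= lam <= l2 /\ exists s, in_S q c lam s /\ cost P c s = B%:E.

Lemma cost_ivp_refl lam : cost_ivp lam lam.
Proof.
move=> s1 s2 B1 B2 B hs1 hs2 hB1 hB2 hB; exists lam; split; first by rewrite lexx.
exact: in_S_cost_convex hs1 hs2 hB1 hB2 hB.
Qed.

Lemma cost_ivp_bridge {l1 m1 m2 l2 g} :
  l1 <= m1 <= l2 -> l1 <= m2 <= l2 -> in_S q c m1 g -> in_S q c m2 g ->
  cost_ivp l1 m1 -> cost_ivp m2 l2 -> cost_ivp l1 l2.
Proof.
move=> /andP[l1m1 m1l2] /andP[l1m2 m2l2] hg1 hg2 ivp1 ivp2 s1 s2 B1 B2 B hs1 hs2 hB1 hB2.
have [C hC] := cost_finite hg1.1.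
case/(between_split C) => hB.
- have [lam [/andP[l1lam lamm1] attained]] := ivp1 _ _ _ _ _ hs1 hg1 hB1 hC hB.
  by exists lam; split=> //; rewrite l1lam (le_trans lamm1).
- have [lam [/andP[m2lam laml2] attained]] := ivp2 _ _ _ _ _ hg2 hs2 hC hB2 hB.
  by exists lam; split=> //; rewrite laml2 (le_trans l1m2).
Qed.

Lemma cost_ivp_tie_free l1 l2 : l1 < l2 -> tie_free l1 l2 -> cost_ivp l1 l2.
Proof.
move=> l12 tf; pose nu := (l1 + l2) / 2.
have hnu : l1 < nu < l2 by apply/andP; split; rewrite /nu; lra.
have hl1 : l1 <= l1 <= l2 by rewrite lexx ltW.
have hl2 : l1 <= l2 <= l2 by rewrite lexx ltW.
apply: (cost_ivp_bridge hl1 hl2 _ _ (cost_ivp_refl l1) (cost_ivp_refl l2));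
  exact: in_S_stable tf hnu _ (greedy_in_S nu).
Qed.

Lemma cost_ivp_split {l1} mu {l2} : l1 <= mu <= l2 ->
  cost_ivp l1 mu -> cost_ivp mu l2 -> cost_ivp l1 l2.
Proof. by move=> hmu; apply: (cost_ivp_bridge hmu hmu (greedy_in_S mu) (greedy_in_S mu)). Qed.

Lemma cost_ivp_of_ties (ts : seq R) l1 l2 : l1 < l2 ->
  (forall mu, l1 < mu < l2 -> Lambda q c mu -> mu \in ts) -> cost_ivp l1 l2.
Proof.
elim: ts l1 l2 => [|t ts IH] l1 l2 l12 ties.
  by apply: cost_ivp_tie_free => // mu /ties /[apply].
have [/andP[l1t tl2]|t_out] := boolP (l1 < t < l2); last first.
  apply: IH => // mu hmu tie; move: (ties mu hmu tie); rewrite inE => /predU1P[mu_t|//].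
  by rewrite -mu_t hmu in t_out.
apply: (cost_ivp_split t); first by rewrite !ltW.
- apply: IH => // mu /andP[l1mu mut] tie.
  have hmu : l1 < mu < l2 by rewrite l1mu (lt_trans mut).
  by move: (ties mu hmu tie); rewrite inE (lt_eqF mut).
- apply: IH => // mu /andP[tmu mul2] tie.
  have hmu : l1 < mu < l2 by rewrite mul2 (lt_trans l1t).
  by move: (ties mu hmu tie); rewrite inE (gt_eqF tmu).
Qed.

End Routing.

Theorem lemma5 (d : measure_display) (X : measurableType d) (R : realType)
  (P : probability X R) (k : nat) (hk : (0 < k)%N)
  (q c : 'I_k -> X -> R)
  (hq : forall i, P.-integrable setT (fun x => (q i x)%:E))
  (hc : forall i, P.-integrable setT (fun x => (c i x)%:E))
  (hfin : finite_set (Lambda q c))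
  (lam1 lam2 : R) (h0 : 0 <= lam1) (h12 : lam1 < lam2)
  (s1 s2 : X -> 'I_k -> R) (hs1 : in_S q c lam1 s1) (hs2 : in_S q c lam2 s2)
  (B1 B2 : R) (hB1 : cost P c s1 = B1%:E) (hB2 : cost P c s2 = B2%:E) :
  forall B : R, B2 <= B <= B1 ->
    exists lam : R, lam1 <= lam <= lam2 /\
      exists s : X -> 'I_k -> R, in_S q c lam s /\ cost P c s = B%:E.
Proof.
move=> B hB; have [ts Lambda_ts] := (finite_seqP _).1 hfin.
have ties mu : lam1 < mu < lam2 -> Lambda q c mu -> mu \in ts.
  by rewrite Lambda_ts.
have ivp := cost_ivp_of_ties P q c hk hq hc ts lam1 lam2 h12 ties.
by apply: ivp hs1 hs2 hB1 hB2 _; right.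
Qed.
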